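(* In the $N$-body setting of the context, let $\mathcal S$ be any set of particle pairs, enumerated in any order, and define $$\psi^{\mathrm{[DKB]^2}}_h=e^{\frac h2\hat T}\,e^{\frac h2\hat V_c}\,\psi^{\dagger W_s}_{h/2}\,\psi^{W_s}_{h/2}\,e^{\frac h2\hat V_c}\,e^{\frac h2\hat T}.$$ Then $$H^{\mathrm{[DKB]^2}}_{\mathrm{err}}=-\frac{h^2}{24}\{\{V_c,T\},T\}+\frac{h^2}{12}\{\{T,V_c\},V_c\}+\frac{h^2}{6}\{\{T,V_s\},V_c\}+\frac{h^2}{48}\{\{T,V_s\},V_s\}_3+\mathcal O(h^4).$$
   Context: Particles $i=1,\dots,N$ with masses $m_i>0$, positions $\vec x_i$, momenta $\vec p_i$ in $\mathbb R^3$; $G_N>0$. $T_i=\vec p_i^{\,2}/(2m_i)$, $T=\sum_iT_i$, $V_{ij}=-G_Nm_im_j/|\vec x_i-\vec x_j|$, $V=\sum_{i<j}V_{ij}$, $H=T+V$. $\mathcal S$ is a set of unordered pairs $\{i,j\}$; $V_s=\sum_{\{i,j\}\in\mathcal S}V_{ij}$, $V_c=V-V_s$. Poisson bracket $\{A,B\}=\sum_i(\partial_{\vec x_i}A\cdot\partial_{\vec p_i}B-\partial_{\vec p_i}A\cdot\partial_{\vec x_i}B)$; Lie operator $\hat Ff=\{f,F\}$, $e^{t\hat F}=\sum_kt^k\hat F^k/k!$; $[\hat A,\hat B]=\widehat{\{B,A\}}$. The surrogate Hamiltonian $\tilde H$ of a product $\Psi_h$ of such exponentials is the formal power series in $h$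 with $\Psi_h=\exp(h\widehat{\tilde H})$ from the Baker–Campbell–Hausdorff formula; $H_{\mathrm{err}}=\tilde H-H$; $\mathcal O(h^k)$ means terms of order $\ge k$. Enumerate $\mathcal S$ as $(i_n,j_n)$, $n=1,\dots,K_s$; $H_n=T_{i_n}+T_{j_n}+V_{i_nj_n}$; $B_n(h)=e^{h\hat H_n}e^{-h(\hat T_{i_n}+\hat T_{j_n})}$, $B_n^\dagger(h)=e^{-h(\hat T_{i_n}+\hat T_{j_n})}e^{h\hat H_n}$; $\psi^{W_s}_h=B_{K_s}(h)\cdots B_1(h)$, $\psi^{\dagger W_s}_h=B_1^\dagger(h)\cdots B_{K_s}^\dagger(h)$. $\{\{T,V_s\},V_s\}_3=\{\{T,V_s\},V_s\}-\sum_{\{i,j\}\in\mathcal S}\{\{T,V_{ij}\},V_{ij}\}$. *)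

From Stdlib Require Import Reals List Arith.
From Coquelicot Require Import Coquelicot.
Import ListNotations.
Open Scope R_scope.

(** Phase space point: (positions, momenta); [fst z i a] is coordinate
    a (a < 3) of the position of particle i (i < N); same for momenta. *)
Definition PS : Type := ((nat -> nat -> R) * (nat -> nat -> R))%type.
Definition PSfun : Type := PS -> R.

Definition rsum (n : nat) (f : nat -> R) : R := fold_right Rplus 0 (map f (seq 0 n)).
Definition lsum {A : Type} (l : list A) (f : A -> R) : R := fold_right Rplus 0 (map f l).

Definition upd (X : nat -> nat -> R) (i a : nat) (t : R) : nat -> nat -> R :=
  fun j b => if (Nat.eqb j i && Nat.eqb b a)%bool then t else X j b.

Definition dX (i a : nat) (F : PSfun) (z : PS) : R :=
  Derive (fun t => F (upd (fst z) i a t, snd z)) (fst z i a).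
Definition dP (i a : nat) (F : PSfun) (z : PS) : R :=
  Derive (fun t => F (fst z, upd (snd z) i a t)) (snd z i a).

Definition pb (N : nat) (A B : PSfun) : PSfun := fun z =>
  rsum N (fun i => rsum 3 (fun a =>
    dX i a A z * dP i a B z - dP i a A z * dX i a B z)).

Definition fadd (A B : PSfun) : PSfun := fun z => A z + B z.
Definition fsub (A B : PSfun) : PSfun := fun z => A z - B z.
Definition fscal (c : R) (A : PSfun) : PSfun := fun z => c * A z.

Definition Ti (m : nat -> R) (i : nat) : PSfun := fun z =>
  rsum 3 (fun a => (snd z i a) ^ 2) / (2 * m i).
Definition Ttot (N : nat) (m : nat -> R) : PSfun := fun z => rsum N (fun i => Ti m i z).
Definition dist (z : PS) (i j : nat) : R :=
  sqrt (rsum 3 (fun a => (fst z i a - fst z j a) ^ 2)).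
Definition Vij (G : R) (m : nat -> R) (i j : nat) : PSfun := fun z =>
  - G * m i * m j / dist z i j.
Definition Vtot (N : nat) (G : R) (m : nat -> R) : PSfun := fun z =>
  rsum N (fun i => rsum N (fun j => if Nat.ltb i j then Vij G m i j z else 0)).
Definition Htot N G m : PSfun := fadd (Ttot N m) (Vtot N G m).
(** S is an enumeration (list) of the pairs in the set 𝒮 *)
Definition Vs (G : R) (m : nat -> R) (S : list (nat * nat)) : PSfun := fun z =>
  lsum S (fun p => Vij G m (fst p) (snd p) z).
Definition Vc N G m S : PSfun := fsub (Vtot N G m) (Vs G m S).
Definition Hn G m (p : nat * nat) : PSfun :=
  fadd (fadd (Ti m (fst p)) (Ti m (snd p))) (Vij G m (fst p) (snd p)).
Definition Tpair m (p : nat * nat) : PSfun := fadd (Ti m (fst p)) (Ti m (snd p)).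

Definition pb3 N G m S : PSfun := fun z =>
  pb N (pb N (Ttot N m) (Vs G m S)) (Vs G m S) z
  - lsum S (fun p => pb N (pb N (Ttot N m) (Vij G m (fst p) (snd p)))
                             (Vij G m (fst p) (snd p)) z).

(** Formal power series in h with coefficients phase-space functions:
    [A k] is the coefficient of h^k. *)
Definition series : Type := nat -> PSfun.
Definition szero : series := fun _ _ => 0.
Definition sadd (A B : series) : series := fun k z => A k z + B k z.
Definition sscal (c : R) (A : series) : series := fun k z => c * A k z.
(** Lie bracket transported from the Lie operators:
    [Â, B̂] = \widehat{\{B,A\}}, so on functions [A,B] := {B,A};
    extended bilinearly (Cauchy product) to series. *)
Definition sbr (N : nat) (A B : series) : series := fun k z =>
  rsum (S k) (fun j => pb N (B (k - j)%nat) (A j) z).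

(** Baker–Campbell–Hausdorff: log(e^X e^Y) up to total degree 4
    (exact for coefficients of h^k, k <= 4, when X, Y have no h^0 term). *)
Definition bch (N : nat) (X Y : series) : series :=
  let XY := sbr N X Y in
  sadd (sadd (sadd X Y) (sscal (1/2) XY))
   (sadd (sadd (sscal (1/12) (sbr N X XY)) (sscal (-1/12) (sbr N Y XY)))
         (sscal (-1/24) (sbr N Y (sbr N X XY)))).

(** generator of e^{c h F̂} as a series: c h F *)
Definition mono (c : R) (F : PSfun) : series := fun k =>
  if Nat.eqb k 1 then fscal c F else fun _ => 0.

(** h·H̃ for a product e^{X_1} ... e^{X_n} (operators composed left to right) *)
Definition bchl (N : nat) (l : list series) : series := fold_left (bch N) l szero.

(** The exponents of ψ^{[DKB]^2}_h =
    e^{h/2 T} e^{h/2 V_c} ψ^{†W_s}_{h/2} ψ^{W_s}_{h/2} e^{h/2 V_c} e^{h/2 T},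
    ψ^{†W_s}_{h/2} = B_1^†(h/2)…B_K^†(h/2), B^†(h) = e^{-h(T_i+T_j)} e^{h H_n},
    ψ^{W_s}_{h/2} = B_K(h/2)…B_1(h/2),   B(h) = e^{h H_n} e^{-h(T_i+T_j)}. *)
Definition DKB2_factors N G m S : list series :=
  [mono (1/2) (Ttot N m); mono (1/2) (Vc N G m S)]
  ++ flat_map (fun p => [mono (-1/2) (Tpair m p); mono (1/2) (Hn G m p)]) S
  ++ flat_map (fun p => [mono (1/2) (Hn G m p); mono (-1/2) (Tpair m p)]) (rev S)
  ++ [mono (1/2) (Vc N G m S); mono (1/2) (Ttot N m)].

Definition Err2 N G m S : PSfun := fun z =>
  - 1/24 * pb N (pb N (Vc N G m S) (Ttot N m)) (Ttot N m) z
  + 1/12 * pb N (pb N (Ttot N m) (Vc N G m S)) (Vc N G m S) z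
  + 1/6 * pb N (pb N (Ttot N m) (Vs G m S)) (Vc N G m S) z
  + 1/48 * pb3 N G m S z.

(** h(H + h^2 Err2): coefficients of h^0..h^4 *)
Definition target N G m S : series := fun k =>
  if Nat.eqb k 1 then Htot N G m
  else if Nat.eqb k 3 then Err2 N G m S
  else fun _ => 0.

Definition noncoll (N : nat) (z : PS) : Prop :=
  forall i j, (i < N)%nat -> (j < N)%nat -> i <> j ->
    exists a, (a < 3)%nat /\ fst z i a <> fst z j a.

From Pilot Require Import Defs.
From Stdlib Require Import Reals List Arith Lra Lia.
From Stdlib Require Import FunctionalExtensionality ClassicalEpsilon ProofIrrelevance Classical.
From Coquelicot Require Import Coquelicot.
Import ListNotations.
Open Scope R_scope.

(* The exponents of the [DKB]^2 product live in the Lie algebra of functions smooth off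
   collisions, with bracket [A,B] = {B,A}; the Jacobi identity holds there because second
   partial derivatives commute. The list of factors has the form w ++ rev w, and for such
   palindromes the truncated BCH series contains only odd powers of h: the h-coefficient is
   2 (sum of w) = H, and the h^3-coefficient grows letter by letter by the symmetric BCH term
   -1/6 ([u,[u,W]] + [W,[u,W]]). Writing T = T_pair + T_rest and H_n = T_pair + V_ij, where
   T_rest commutes with T_pair and V_ij and all potentials commute, each pair block preserves
   the shape 1/24 [T,[T,V_s]] + 1/16 [V_s,[T,V_s]] - 1/48 (sum of [V_ij,[V_ij,T]]) of the
   h^3-coefficient, and the outer letters T/2 and V_c/2 then produce the stated error. *)

(** * Lie algebras separated by real evaluations *)

(* After bilinear expansion, an identity between brackets becomes a linear relation between
   the reals [ev i m] for bracket monomials m, which [lra] closes from the instances of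
   antisymmetry and Jacobi supplied by the tactics [lie_anti] and [lie_jacobi] below. *)
Record EvLie := {
  carrier :> Type;
  ladd : carrier -> carrier -> carrier;
  lscal : R -> carrier -> carrier;
  lzero : carrier;
  lbr : carrier -> carrier -> carrier;
  point : Type;
  ev : point -> carrier -> R;
  ev_add : forall i x y, ev i (ladd x y) = ev i x + ev i y;
  ev_scal : forall i r x, ev i (lscal r x) = r * ev i x;
  ev_zero : forall i, ev i lzero = 0;
  ev_inj : forall x y, (forall i, ev i x = ev i y) -> x = y;
  lbr_addl : forall x y w, lbr (ladd x y) w = ladd (lbr x w) (lbr y w);
  lbr_scall : forall r x w, lbr (lscal r x) w = lscal r (lbr x w);
  ev_lbr_anti : forall i x y, ev i (lbr x y) = - ev i (lbr y x);
  ev_jacobi : forall i x y w,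
    ev i (lbr x (lbr y w)) + ev i (lbr y (lbr w x)) + ev i (lbr w (lbr x y)) = 0 }.

Arguments ladd {_} _ _. Arguments lscal {_} _ _. Arguments lzero {_}. Arguments lbr {_} _ _.
Arguments ev {_} _ _. Arguments ev_inj {_} _ _ _.
Arguments ev_add {_} _ _ _. Arguments ev_scal {_} _ _ _. Arguments ev_zero {_} _.
Arguments lbr_addl {_} _ _ _. Arguments lbr_scall {_} _ _ _.
Arguments ev_lbr_anti {_} _ _ _. Arguments ev_jacobi {_} _ _ _ _.

Notation "a +l b" := (ladd a b) (at level 50, left associativity).
Notation "r *l a" := (lscal r a) (at level 40, left associativity).

Section EvLieTheory.
Context {L : EvLie}.
Implicit Types x y w : L.

Lemma lscal0_zero : lscal 0 lzero = @lzero L.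
Proof. apply ev_inj; intro i; rewrite ev_scal, ev_zero; ring. Qed.

Lemma lbr_0l w : lbr lzero w = @lzero L.
Proof.
  replace (lbr lzero w) with (lbr (lscal 0 lzero) w) by now rewrite lscal0_zero.
  rewrite lbr_scall; apply ev_inj; intro i; rewrite ev_scal, ev_zero; ring.
Qed.

Lemma lbr_addr x y w : lbr w (x +l y) = lbr w x +l lbr w y.
Proof.
  apply ev_inj; intro i.
  rewrite ev_add, !(ev_lbr_anti i w), lbr_addl, ev_add; ring.
Qed.

Lemma lbr_scalr r x w : lbr w (r *l x) = r *l lbr w x.
Proof.
  apply ev_inj; intro i.
  rewrite ev_scal, !(ev_lbr_anti i w), lbr_scall, ev_scal; ring.
Qed.

Lemma lbr_0r w : lbr w lzero = @lzero L.
Proof. apply ev_inj; intro i; rewrite ev_lbr_anti, lbr_0l, ev_zero; ring. Qed.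

Lemma lbr_eq0_sym x y : lbr x y = lzero -> lbr y x = lzero.
Proof. intros E; apply ev_inj; intro i; rewrite ev_lbr_anti, E, ev_zero; ring. Qed.

Definition lie_linear (f : L -> L) :=
  (forall u v, f (u +l v) = f u +l f v) /\ (forall r u, f (r *l u) = r *l f u).

Lemma ev_linear_zero f i : lie_linear f -> ev i (f lzero) = 0.
Proof.
  intros [_ Hs]. replace (f lzero) with (f (lscal 0 lzero)) by now rewrite lscal0_zero.
  rewrite Hs, ev_scal; ring.
Qed.

Lemma ev_lbr_anti_in f i x y : lie_linear f ->
  ev i (f (lbr x y)) + ev i (f (lbr y x)) = 0.
Proof.
  intros Hf. rewrite <- ev_add, <- (proj1 Hf).
  replace (lbr x y +l lbr y x) with (@lzero L) by
    (apply ev_inj; intro j; rewrite ev_add, ev_zero, (ev_lbr_anti j x); ring).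
  apply ev_linear_zero, Hf.
Qed.

Lemma ev_lbr_self_in f i x : lie_linear f -> ev i (f (lbr x x)) = 0.
Proof. intros Hf. pose proof (ev_lbr_anti_in f i x x Hf). lra. Qed.

Lemma ev_jacobi_in f i x y w : lie_linear f ->
  ev i (f (lbr x (lbr y w))) + ev i (f (lbr y (lbr w x))) + ev i (f (lbr w (lbr x y))) = 0.
Proof.
  intros Hf. rewrite <- !ev_add, <- !(proj1 Hf).
  replace (lbr x (lbr y w) +l lbr y (lbr w x) +l lbr w (lbr x y)) with (@lzero L) by
    (apply ev_inj; intro j; rewrite !ev_add, ev_zero, (ev_jacobi j x y w); ring).
  apply ev_linear_zero, Hf.
Qed.

End EvLieTheory.

Ltac lie_expand :=
  repeat first [rewrite lbr_addl | rewrite lbr_addr | rewrite lbr_scall | rewrite lbr_scalr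
               | rewrite lbr_0l | rewrite lbr_0r];
  repeat first [rewrite ev_add | rewrite ev_scal | rewrite ev_zero].

Ltac lie_linear_tac := split; intros; cbv beta; lie_expand; reflexivity.

Ltac ev_point := match goal with |- context [ev ?i _] => i end.

Ltac lie_anti_in f x y :=
  let i := ev_point in let H := fresh "A" in
  pose proof (ev_lbr_anti_in f i x y ltac:(lie_linear_tac)) as H; cbv beta in H.
Ltac lie_anti x y := let T := type of x in lie_anti_in (fun u : T => u) x y.
Ltac lie_self_in f x :=
  let i := ev_point in let H := fresh "A" in
  pose proof (ev_lbr_self_in f i x ltac:(lie_linear_tac)) as H; cbv beta in H.
Ltac lie_jacobi_in f x y w :=
  let i := ev_point in let H := fresh "J" in
  pose proof (ev_jacobi_in f i x y w ltac:(lie_linear_tac)) as H; cbv beta in H.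
Ltac lie_jacobi x y w := let T := type of x in lie_jacobi_in (fun u : T => u) x y w.

(** * Baker–Campbell–Hausdorff on truncated series *)

Definition lser (L : EvLie) := nat -> L.

Section TruncatedBCH.
Context {L : EvLie}.

Definition lie_sum (n : nat) (f : nat -> L) : L := fold_right ladd lzero (map f (seq 0 n)).
Definition lsbr (A B : lser L) : lser L := fun k =>
  lie_sum (S k) (fun j => lbr (A j) (B (k - j)%nat)).
Definition lsadd (A B : lser L) : lser L := fun k => A k +l B k.
Definition lsscal (c : R) (A : lser L) : lser L := fun k => c *l A k.
Definition lbch (X Y : lser L) : lser L :=
  let XY := lsbr X Y in
  lsadd (lsadd (lsadd X Y) (lsscal (1/2) XY))
   (lsadd (lsadd (lsscal (1/12) (lsbr X XY)) (lsscal (-1/12) (lsbr Y XY)))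
         (lsscal (-1/24) (lsbr Y (lsbr X XY)))).
Definition lmono (u : L) : lser L := fun k => if Nat.eqb k 1 then u else lzero.
Definition lszero : lser L := fun _ => lzero.
Definition lbchl (l : list (lser L)) : lser L := fold_left lbch l lszero.

Definition agree4 (A B : lser L) := forall k, (k <= 4)%nat -> A k = B k.

Lemma agree4_refl A : agree4 A A.
Proof. intros k _; reflexivity. Qed.

Lemma agree4_sym A B : agree4 A B -> agree4 B A.
Proof. intros H k Hk; symmetry; auto. Qed.

Lemma agree4_trans A B C : agree4 A B -> agree4 B C -> agree4 A C.
Proof. intros H1 H2 k Hk; rewrite H1, H2; auto. Qed.

Ltac lbch_unfold := unfold lbch, lsbr, lsadd, lsscal, lmono, lszero, lie_sum; simpl.

Ltac agree4_cases H :=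
  let a0 := fresh in let a1 := fresh in let a2 := fresh in
  let a3 := fresh in let a4 := fresh in
  pose proof (H 0%nat ltac:(lia)) as a0; pose proof (H 1%nat ltac:(lia)) as a1;
  pose proof (H 2%nat ltac:(lia)) as a2; pose proof (H 3%nat ltac:(lia)) as a3;
  pose proof (H 4%nat ltac:(lia)) as a4; rewrite ?a0, ?a1, ?a2, ?a3, ?a4.

Lemma lbch_coef0 A B : A 0%nat = lzero -> B 0%nat = lzero -> lbch A B 0%nat = lzero.
Proof. intros HA HB. apply ev_inj; intro i; lbch_unfold; rewrite HA, HB; lie_expand; lra. Qed.

Lemma lbch_agree4 A A' B B' : agree4 A A' -> agree4 B B' -> agree4 (lbch A B) (lbch A' B').
Proof.
  intros HA HB k Hk.
  destruct k as [|[|[|[|[|k]]]]]; [| | | | | lia]; lbch_unfold;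
  agree4_cases HA; agree4_cases HB; reflexivity.
Qed.

Lemma lbch_zero_l x : agree4 (lbch lszero (lmono x)) (lmono x).
Proof.
  intros k Hk; destruct k as [|[|[|[|[|k]]]]]; [| | | | | lia];
  apply ev_inj; intro i; lbch_unfold; lie_expand; lra.
Qed.

Lemma lbch_zero_r x : agree4 (lbch (lmono x) lszero) (lmono x).
Proof.
  intros k Hk; destruct k as [|[|[|[|[|k]]]]]; [| | | | | lia];
  apply ev_inj; intro i; lbch_unfold; lie_expand; lra.
Qed.

Definition lbch_mono_r_coef (A : lser L) (y : L) (k : nat) : L :=
  match k with
  | 1 => A 1%nat +l y
  | 2 => A 2%nat +l (1/2) *l lbr (A 1%nat) y
  | 3 => A 3%nat +l (1/2) *l lbr (A 2%nat) y +l (1/12) *l lbr (A 1%nat) (lbr (A 1%nat) y)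
         +l (-1/12) *l lbr y (lbr (A 1%nat) y)
  | 4 => A 4%nat +l (1/2) *l lbr (A 3%nat) y +l (1/12) *l lbr (A 1%nat) (lbr (A 2%nat) y)
         +l (1/12) *l lbr (A 2%nat) (lbr (A 1%nat) y) +l (-1/12) *l lbr y (lbr (A 2%nat) y)
         +l (-1/24) *l lbr y (lbr (A 1%nat) (lbr (A 1%nat) y))
  | _ => lzero
  end.

Definition lbch_mono_l_coef (x : L) (B : lser L) (k : nat) : L :=
  match k with
  | 1 => x +l B 1%nat
  | 2 => B 2%nat +l (1/2) *l lbr x (B 1%nat)
  | 3 => B 3%nat +l (1/2) *l lbr x (B 2%nat) +l (1/12) *l lbr x (lbr x (B 1%nat))
         +l (-1/12) *l lbr (B 1%nat) (lbr x (B 1%nat))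
  | 4 => B 4%nat +l (1/2) *l lbr x (B 3%nat) +l (1/12) *l lbr x (lbr x (B 2%nat))
         +l (-1/12) *l lbr (B 1%nat) (lbr x (B 2%nat)) +l (-1/12) *l lbr (B 2%nat) (lbr x (B 1%nat))
         +l (-1/24) *l lbr (B 1%nat) (lbr x (lbr x (B 1%nat)))
  | _ => lzero
  end.

Lemma lbch_mono_r A y : A 0%nat = lzero ->
  agree4 (lbch A (lmono y)) (lbch_mono_r_coef A y).
Proof.
  intros HA k Hk.
  destruct k as [|[|[|[|[|k]]]]]; [| | | | | lia];
  apply ev_inj; intro i; lbch_unfold; rewrite ?HA; lie_expand; lra.
Qed.

Lemma lbch_mono_l x B : B 0%nat = lzero ->
  agree4 (lbch (lmono x) B) (lbch_mono_l_coef x B).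
Proof.
  intros HB k Hk.
  destruct k as [|[|[|[|[|k]]]]]; [| | | | | lia];
  apply ev_inj; intro i; lbch_unfold; rewrite ?HB; lie_expand; lra.
Qed.

Lemma lbch_mono_r_coef_agree4 A A' y k : agree4 A A' ->
  lbch_mono_r_coef A y k = lbch_mono_r_coef A' y k.
Proof. intros HA; destruct k as [|[|[|[|[|k]]]]]; cbn; agree4_cases HA; reflexivity. Qed.

Lemma lbch_mono_l_coef_agree4 x B B' k : agree4 B B' ->
  lbch_mono_l_coef x B k = lbch_mono_l_coef x B' k.
Proof. intros HB; destruct k as [|[|[|[|[|k]]]]]; cbn; agree4_cases HB; reflexivity. Qed.

Lemma lbch_mono_coef_assoc x y F k : (k <= 4)%nat ->
  lbch_mono_r_coef (lbch_mono_l_coef x F) y k = lbch_mono_l_coef x (lbch_mono_r_coef F y) k.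
Proof.
  intros Hk.
  destruct k as [|[|[|[|[|k]]]]]; [| | | | | lia]; apply ev_inj; intro i; cbn; lie_expand;
    [lra | lra | lra | ..].
  - lie_anti_in (fun u => lbr x u) (F 1%nat) y.
    lie_anti y (lbr x (F 1%nat)).
    lie_anti_in (fun u => lbr y u) x (F 1%nat).
    lie_jacobi x y (F 1%nat).
    lra.
  - lie_anti y (lbr x (F 2%nat)).
    lie_jacobi (F 2%nat) y x.
    lie_jacobi (F 1%nat) (lbr (F 1%nat) y) x.
    lie_anti (lbr x (F 1%nat)) (lbr x y).
    lie_jacobi x y (lbr x (F 1%nat)).
    lie_anti_in (fun u => lbr (lbr x (F 1%nat)) u) x y.
    lie_anti_in (fun u => lbr (F 1%nat) u) x (lbr (F 1%nat) y).
    lie_jacobi_in (fun u => lbr y u) x y (F 1%nat).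
    lie_anti y (lbr x (lbr x (F 1%nat))).
    lie_jacobi (lbr x (F 1%nat)) y x.
    lie_anti_in (fun u => lbr y u) x (lbr x (F 1%nat)).
    lie_anti_in (fun u => lbr (F 1%nat) u) x (lbr x y).
    lie_jacobi (lbr x (F 1%nat)) y (F 1%nat).
    lie_anti (lbr (F 1%nat) y) (lbr x (F 1%nat)).
    lie_anti_in (fun u => lbr (F 2%nat) u) x y.
    lie_anti_in (fun u => lbr (lbr x (F 1%nat)) u) (F 1%nat) y.
    lie_jacobi y (lbr (F 1%nat) y) x.
    lie_jacobi_in (fun u => lbr x u) y x (F 1%nat).
    lie_anti_in (fun u => lbr y (lbr u y)) x (F 1%nat).
    lie_anti (lbr (F 1%nat) (lbr x (F 1%nat))) y.
    lie_anti_in (fun u => lbr x (lbr (F 1%nat) u)) y x.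
    lie_anti_in (fun u => lbr y u) y (lbr (F 1%nat) x).
    lie_anti_in (fun u => lbr y (lbr u x)) (F 1%nat) y.
    lie_jacobi x (F 1%nat) (lbr x y).
    lie_anti_in (fun u => lbr y u) x (lbr y (F 1%nat)).
    lra.
Qed.

Lemma lbch_assoc_mono x y F : F 0%nat = lzero ->
  agree4 (lbch (lbch (lmono x) F) (lmono y)) (lbch (lmono x) (lbch F (lmono y))).
Proof.
  intros HF k Hk.
  rewrite (lbch_mono_r _ _ (lbch_coef0 _ _ eq_refl HF) k Hk),
          (lbch_mono_l _ _ (lbch_coef0 _ _ HF eq_refl) k Hk).
  rewrite (lbch_mono_r_coef_agree4 _ (lbch_mono_l_coef x F)) by (apply lbch_mono_l, HF).
  rewrite (lbch_mono_l_coef_agree4 _ _ (lbch_mono_r_coef F y)) by (apply lbch_mono_r, HF).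
  apply lbch_mono_coef_assoc, Hk.
Qed.

End TruncatedBCH.

Section Palindromes.
Context {L : EvLie}.

Definition odd_lser (p1 p3 : L) : lser L := fun k =>
  match k with 1 => p1 | 3 => p3 | _ => lzero end.

Definition sym_bch3 (u w : L) : L := (-1/6) *l (lbr u (lbr u w) +l lbr w (lbr u w)).

Lemma lbch_sym_odd y (Z : lser L) : Z 0%nat = lzero -> Z 2%nat = lzero -> Z 4%nat = lzero ->
  agree4 (lbch (lbch (lmono y) Z) (lmono y))
         (odd_lser (2 *l y +l Z 1%nat) (Z 3%nat +l sym_bch3 y (Z 1%nat))).
Proof.
  intros H0 H2 H4 k Hk.
  rewrite (lbch_mono_r _ _ (lbch_coef0 _ _ eq_refl H0) k Hk).
  rewrite (lbch_mono_r_coef_agree4 _ (lbch_mono_l_coef y Z)) by (apply lbch_mono_l, H0).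
  destruct k as [|[|[|[|[|k]]]]]; [| | | | | lia]; apply ev_inj; intro i; cbn;
    unfold sym_bch3; rewrite ?H0, ?H2, ?H4; lie_expand; [lra | lra | ..].
  - lie_anti (Z 1%nat) y. lie_self_in (fun u : L => u) y.
    lra.
  - lie_anti_in (fun u => lbr (Z 1%nat) u) y (Z 1%nat).
    lie_anti (lbr y (Z 1%nat)) y.
    lie_jacobi y (Z 1%nat) y.
    lie_anti_in (fun u => lbr y u) y (Z 1%nat).
    lra.
  - lie_anti y (Z 3%nat).
    lie_anti (lbr y (Z 1%nat)) (lbr (Z 1%nat) y).
    lie_anti_in (fun u => lbr (lbr y (Z 1%nat)) u) (Z 1%nat) y.
    lie_anti (lbr y (lbr y (Z 1%nat))) y.
    lie_anti (lbr (Z 1%nat) (lbr y (Z 1%nat))) y.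
    lie_anti_in (fun u => lbr (lbr (Z 1%nat) u) y) y (Z 1%nat).
    lie_self_in (fun u => lbr (lbr y (Z 1%nat)) u) y.
    lie_jacobi_in (fun u => lbr y u) y y (Z 1%nat).
    lie_jacobi_in (fun u => lbr y u) y y y.
    lie_anti y (lbr (Z 1%nat) (lbr (Z 1%nat) y)).
    lie_jacobi (lbr (Z 1%nat) y) y (Z 1%nat).
    lie_anti_in (fun u => lbr (Z 1%nat) u) y (lbr y (Z 1%nat)).
    lie_jacobi (lbr y (Z 1%nat)) y (Z 1%nat).
    lie_anti_in (fun u => lbr (Z 1%nat) (lbr u y)) y (Z 1%nat).
    lra.
Qed.

Lemma fold_lbch_coef0 (l : list L) (A : lser L) :
  A 0%nat = lzero -> fold_left lbch (map lmono l) A 0%nat = lzero.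
Proof.
  revert A; induction l as [|u l IH]; intros A HA; simpl; auto.
  apply IH, lbch_coef0; auto.
Qed.

Lemma fold_lbch_agree4 (l : list (lser L)) (A A' : lser L) :
  agree4 A A' -> agree4 (fold_left lbch l A) (fold_left lbch l A').
Proof.
  revert A A'; induction l as [|u l IH]; intros A A' HA; simpl; auto.
  apply IH, lbch_agree4; auto using agree4_refl.
Qed.

Lemma fold_lbch_mono_start (l : list L) (x : L) :
  agree4 (fold_left lbch (map lmono l) (lmono x)) (lbch (lmono x) (lbchl (map lmono l))).
Proof.
  unfold lbchl; induction l as [|y l IH] using rev_ind.
  - apply agree4_sym, lbch_zero_r.
  - rewrite map_app, !fold_left_app; simpl.
    eapply agree4_trans; [apply lbch_agree4; [apply IH | apply agree4_refl] |].
    apply lbch_assoc_mono, fold_lbch_coef0; reflexivity.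
Qed.

Fixpoint pal1 (l : list L) : L :=
  match l with [] => lzero | u :: l' => 2 *l u +l pal1 l' end.
Fixpoint pal3 (l : list L) : L :=
  match l with [] => lzero | u :: l' => pal3 l' +l sym_bch3 u (pal1 l') end.

Lemma lbchl_palindrome (l : list L) :
  agree4 (lbchl (map lmono (l ++ rev l))) (odd_lser (pal1 l) (pal3 l)).
Proof.
  induction l as [|u l IH].
  - intros k Hk; destruct k as [|[|[|[|[|k]]]]]; reflexivity.
  - replace ((u :: l) ++ rev (u :: l)) with (u :: ((l ++ rev l) ++ [u]))
      by (simpl; rewrite app_assoc; reflexivity).
    unfold lbchl; rewrite map_cons, map_app, map_cons; simpl fold_left.
    eapply agree4_trans; [apply fold_lbch_agree4, lbch_zero_l |].
    rewrite fold_left_app; simpl fold_left.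
    eapply agree4_trans; [apply lbch_agree4; [apply fold_lbch_mono_start | apply agree4_refl] |].
    eapply agree4_trans;
      [apply lbch_agree4; [apply lbch_agree4; [apply agree4_refl | apply IH] |
                           apply agree4_refl] |].
    apply lbch_sym_odd; reflexivity.
Qed.

End Palindromes.

Ltac lie_expand_all :=
  repeat first [rewrite lbr_addl in * | rewrite lbr_addr in * | rewrite lbr_scall in *
               | rewrite lbr_scalr in * | rewrite lbr_0l in * | rewrite lbr_0r in *];
  repeat first [rewrite ev_add in * | rewrite ev_scal in * | rewrite ev_zero in *].

Section DKBAlgebra.
Context {L : EvLie}.
Implicit Types tp tr v w TT D : L.

Definition blocks_coef3 TT w D : L :=
  (1/24) *l lbr TT (lbr TT w) +l (1/16) *l lbr w (lbr TT w) +l (-1/48) *l D.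

Lemma blocks_coef3_step tp tr v w TT D :
  TT = tp +l tr -> lbr tr v = lzero -> lbr tr tp = lzero -> lbr v w = lzero ->
  (blocks_coef3 TT w D +l sym_bch3 ((1/2) *l (tp +l v)) w)
    +l sym_bch3 ((-1/2) *l tp) (2 *l ((1/2) *l (tp +l v)) +l w)
  = blocks_coef3 TT (v +l w) (D +l lbr v (lbr v TT)).
Proof.
  intros -> Rtv Rtt Rvw.
  pose proof (lbr_eq0_sym _ _ Rtv) as Rvt.
  pose proof (lbr_eq0_sym _ _ Rtt) as Rtt'.
  pose proof (lbr_eq0_sym _ _ Rvw) as Rwv.
  apply ev_inj; intro i; unfold blocks_coef3, sym_bch3; lie_expand.
  lie_jacobi tp v tr.
  lie_jacobi tp tp tp.
  lie_jacobi v w tp.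
  lie_anti_in (fun u => lbr v u) tp w.
  lie_jacobi tr v w.
  lie_anti_in (fun u => lbr v u) v tp.
  lie_anti_in (fun u => lbr v u) tr w.
  lie_self_in (fun u => lbr w u) tp.
  lie_self_in (fun u => lbr v u) tp.
  rewrite ?Rtv, ?Rvt, ?Rtt, ?Rtt', ?Rvw, ?Rwv in *; lie_expand_all.
  lra.
Qed.

Lemma ev_pal3_dkb TT Vc Vs D (bl : list L) i :
  lbr Vc Vs = lzero -> pal1 bl = Vs -> pal3 bl = blocks_coef3 TT Vs D ->
  ev i (pal3 ((1/2) *l TT :: (1/2) *l Vc :: bl))
  = - 1/24 * ev i (lbr TT (lbr TT Vc)) + 1/12 * ev i (lbr Vc (lbr Vc TT))
    + 1/6 * ev i (lbr Vc (lbr Vs TT)) + 1/48 * (ev i (lbr Vs (lbr Vs TT)) - ev i D).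
Proof.
  intros Rcs H1 H3; simpl; rewrite H1, H3.
  pose proof (lbr_eq0_sym _ _ Rcs) as Rsc.
  unfold blocks_coef3, sym_bch3; lie_expand.
  lie_jacobi TT Vc Vs.
  lie_anti_in (fun u => lbr Vc u) TT Vs.
  lie_anti_in (fun u => lbr Vs u) TT Vs.
  lie_anti_in (fun u => lbr Vc u) Vc TT.
  rewrite ?Rcs, ?Rsc in *; lie_expand_all.
  lra.
Qed.

Definition dkb_blocks (tpf hpf : nat * nat -> L) (S : list (nat * nat)) : list L :=
  flat_map (fun p => [(-1/2) *l tpf p; (1/2) *l hpf p]) S.
Definition lie_lsum (vf : nat * nat -> L) (S : list (nat * nat)) : L :=
  fold_right (fun p acc => vf p +l acc) lzero S.
Definition lie_lsum_ad2 (vf : nat * nat -> L) TT (S : list (nat * nat)) : L :=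
  fold_right (fun p acc => acc +l lbr (vf p) (lbr (vf p) TT)) lzero S.

Lemma pal1_dkb_blocks tpf hpf vf S :
  (forall p, In p S -> hpf p = tpf p +l vf p) -> pal1 (dkb_blocks tpf hpf S) = lie_lsum vf S.
Proof.
  induction S as [|p S IH]; intros H; simpl; auto.
  rewrite IH by (intros; apply H; simpl; auto).
  rewrite (H p) by (simpl; auto).
  apply ev_inj; intro i; lie_expand; lra.
Qed.

Lemma lbr_lie_lsum_eq0 v vf S :
  (forall q, In q S -> lbr v (vf q) = lzero) -> lbr v (lie_lsum vf S) = lzero.
Proof.
  induction S as [|q S IH]; intros H; simpl; [apply lbr_0r |].
  rewrite lbr_addr, (H q) by (simpl; auto).
  rewrite IH by (intros; apply H; simpl; auto).
  apply ev_inj; intro i; lie_expand; lra.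
Qed.

Lemma pal3_dkb_blocks tpf hpf trf vf TT S :
  (forall p, In p S -> hpf p = tpf p +l vf p) ->
  (forall p, In p S -> TT = tpf p +l trf p) ->
  (forall p, In p S -> lbr (trf p) (vf p) = lzero) ->
  (forall p, In p S -> lbr (trf p) (tpf p) = lzero) ->
  (forall p q, In p S -> In q S -> lbr (vf p) (vf q) = lzero) ->
  pal3 (dkb_blocks tpf hpf S) = blocks_coef3 TT (lie_lsum vf S) (lie_lsum_ad2 vf TT S).
Proof.
  induction S as [|p S IH]; intros Hh HT Htv Htt Hvv.
  - apply ev_inj; intro i; simpl; unfold blocks_coef3; lie_expand; lra.
  - change (pal3 (dkb_blocks tpf hpf (p :: S))) with
      ((pal3 (dkb_blocks tpf hpf S) +l sym_bch3 ((1/2) *l hpf p) (pal1 (dkb_blocks tpf hpf S)))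
        +l sym_bch3 ((-1/2) *l tpf p) (2 *l ((1/2) *l hpf p) +l pal1 (dkb_blocks tpf hpf S))).
    rewrite IH, (pal1_dkb_blocks _ _ vf), Hh
      by (simpl; auto; intros; first [apply Hh | apply HT | apply Htv | apply Htt | apply Hvv];
          simpl; auto).
    apply blocks_coef3_step with (tr := trf p);
      [apply HT | apply Htv | apply Htt | apply lbr_lie_lsum_eq0; intros; apply Hvv]; simpl; auto.
Qed.

End DKBAlgebra.

Lemma rsum_S n f : rsum (S n) f = rsum n f + f n.
Proof.
  unfold rsum; rewrite seq_S, map_app, fold_right_app; simpl.
  generalize (map f (seq 0 n)); intros l.
  induction l as [|x l IH]; simpl; [ring | rewrite IH; ring].
Qed.

Lemma rsum_ext n f g : (forall i, (i < n)%nat -> f i = g i) -> rsum n f = rsum n g.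
Proof.
  induction n; intros H; [reflexivity |].
  rewrite !rsum_S, (H n) by lia; rewrite IHn by (intros; apply H; lia); reflexivity.
Qed.

Lemma rsum_zero n f : (forall i, (i < n)%nat -> f i = 0) -> rsum n f = 0.
Proof.
  induction n; intros H; [reflexivity |].
  rewrite rsum_S, H by lia; rewrite IHn by (intros; apply H; lia); ring.
Qed.

Lemma rsum_plus n f g : rsum n (fun i => f i + g i) = rsum n f + rsum n g.
Proof. induction n; [unfold rsum; simpl; ring |]. rewrite !rsum_S, IHn; ring. Qed.

Lemma rsum_minus n f g : rsum n (fun i => f i - g i) = rsum n f - rsum n g.
Proof. induction n; [unfold rsum; simpl; ring |]. rewrite !rsum_S, IHn; ring. Qed.

Lemma rsum_scal n c f : rsum n (fun i => c * f i) = c * rsum n f.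
Proof. induction n; [unfold rsum; simpl; ring |]. rewrite !rsum_S, IHn; ring. Qed.

Lemma rsum_mult_r n c f : rsum n f * c = rsum n (fun i => f i * c).
Proof. induction n; [unfold rsum; simpl; ring |]. rewrite !rsum_S, <- IHn; ring. Qed.

Lemma rsum_opp n f : - rsum n f = rsum n (fun i => - f i).
Proof. induction n; [unfold rsum; simpl; ring |]. rewrite !rsum_S, <- IHn; ring. Qed.

Lemma rsum_swap n m f :
  rsum n (fun i => rsum m (fun j => f i j)) = rsum m (fun j => rsum n (fun i => f i j)).
Proof.
  induction n.
  - symmetry; apply rsum_zero; reflexivity.
  - rewrite rsum_S, IHn, <- rsum_plus. apply rsum_ext; intros; rewrite rsum_S; ring.
Qed.

Lemma rsum_split n a f : (a < n)%nat ->
  rsum n f = f a + rsum n (fun i => if Nat.eqb i a then 0 else f i).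
Proof.
  induction n; intros Ha; [lia |].
  rewrite !rsum_S. destruct (Nat.eq_dec a n) as [->|Hne].
  - rewrite Nat.eqb_refl, (rsum_ext n (fun i => if Nat.eqb i n then 0 else f i) f); [ring |].
    intros i Hi; destruct (Nat.eqb_spec i n); [lia | auto].
  - rewrite IHn by lia; destruct (Nat.eqb_spec n a); [lia | ring].
Qed.

(** * Partial derivatives on the collision-free set *)

Definition coord := (bool * nat * nat)%type.
Definition xc i a : coord := (true, i, a).
Definition pc i a : coord := (false, i, a).

Definition set_coord (c : coord) (z : PS) (t : R) : PS :=
  match c with
  | (b, i, a) => if b then (upd (fst z) i a t, snd z) else (fst z, upd (snd z) i a t)
  end.
Definition get_coord (c : coord) (z : PS) : R :=
  match c with (b, i, a) => if b then fst z i a else snd z i a end.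
Definition partial (c : coord) (f : PSfun) (z : PS) : R :=
  Derive (fun t => f (set_coord c z t)) (get_coord c z).

Lemma set_get_coord c z : set_coord c z (get_coord c z) = z.
Proof.
  destruct c as [[b i] a], z as [X P], b; simpl; f_equal;
  apply functional_extensionality; intro j; apply functional_extensionality; intro k;
  unfold upd; destruct (Nat.eqb_spec j i), (Nat.eqb_spec k a); subst; auto.
Qed.

Lemma get_set_coord_cases c c' :
  (forall z t, get_coord c' (set_coord c z t) = t) \/
  (forall z t, get_coord c' (set_coord c z t) = get_coord c' z).
Proof.
  destruct c as [[b i] a], c' as [[b' i'] a'].
  destruct b, b'; simpl; try (right; reflexivity); unfold upd;
  destruct (Nat.eqb_spec i' i), (Nat.eqb_spec a' a); simpl; auto.
Qed.

Lemma ex_derive_get_set_coord c c' z t0 :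
  ex_derive (fun t => get_coord c' (set_coord c z t)) t0.
Proof.
  destruct (get_set_coord_cases c c') as [H|H]; eapply ex_derive_ext.
  - intro t; symmetry; apply H.
  - apply ex_derive_id.
  - intro t; symmetry; apply H.
  - apply ex_derive_const.
Qed.

Lemma partial_get_coord_const c c' : exists r, forall z, partial c (get_coord c') z = r.
Proof.
  unfold partial; destruct (get_set_coord_cases c c') as [H|H].
  - exists 1; intro z; rewrite (Derive_ext _ (fun t => t)) by apply H; apply Derive_id.
  - exists 0; intro z; rewrite (Derive_ext _ (fun _ => get_coord c' z)) by apply H.
    apply Derive_const.
Qed.

Lemma partial_const c z r : partial c (fun _ => r) z = 0.
Proof. unfold partial; apply Derive_const. Qed.

Lemma partial_indep c (F : PSfun) z :
  (forall t, F (set_coord c z t) = F z) -> partial c F z = 0.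
Proof.
  intros H; unfold partial; rewrite (Derive_ext _ (fun _ => F z)) by apply H.
  apply Derive_const.
Qed.

Definition dist2 (z : PS) i j := rsum 3 (fun a => (fst z i a - fst z j a) ^ 2).

Definition collision_free (N : nat) (z : PS) : Prop :=
  forall i j, (i < N)%nat -> (j < N)%nat -> i <> j -> 0 < dist2 z i j.

Lemma noncoll_collision_free N z : noncoll N z -> collision_free N z.
Proof.
  intros H i j Hi Hj Hij; destruct (H i j Hi Hj Hij) as [a [Ha Hne]].
  unfold dist2, rsum; simpl.
  assert (Hs : 0 < (fst z i a - fst z j a) ^ 2)
    by (rewrite <- Rsqr_pow2; apply Rsqr_pos_lt; lra).
  pose proof (pow2_ge_0 (fst z i 0%nat - fst z j 0%nat));
  pose proof (pow2_ge_0 (fst z i 1%nat - fst z j 1%nat));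
  pose proof (pow2_ge_0 (fst z i 2%nat - fst z j 2%nat)).
  assert (a = 0 \/ a = 1 \/ a = 2)%nat as [-> | [-> | ->]] by lia; lra.
Qed.

Lemma ex_derive_dist2 c z i j t0 : ex_derive (fun t => dist2 (set_coord c z t) i j) t0.
Proof.
  unfold dist2, rsum; cbn [map seq fold_right].
  assert (Hc : forall a, ex_derive
    (fun t => fst (set_coord c z t) i a - fst (set_coord c z t) j a) t0).
  { intros a; exact (ex_derive_minus _ _ _ (ex_derive_get_set_coord c (xc i a) z t0)
                                            (ex_derive_get_set_coord c (xc j a) z t0)). }
  repeat (exact (ex_derive_const _ _) || refine (ex_derive_plus _ _ _ _ _));
    apply ex_derive_pow, Hc.
Qed.

Lemma locally_pos_continuous (f : R -> R) x :
  continuous f x -> 0 < f x -> locally x (fun t => 0 < f t).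
Proof.
  intros Hc Hp; apply Hc; exists (mkposreal _ Hp); intros y Hy.
  change (Rabs (y - f x) < f x) in Hy; apply Rabs_def2 in Hy; simpl in Hy; lra.
Qed.

Lemma locally_forall_lt (x : R) n (P : nat -> R -> Prop) :
  (forall i, (i < n)%nat -> locally x (P i)) ->
  locally x (fun t => forall i, (i < n)%nat -> P i t).
Proof.
  induction n; intros H.
  - apply filter_forall; intros; lia.
  - eapply filter_imp;
      [| apply filter_and; [apply IHn; intros; apply H; lia | apply (H n); lia]].
    intros t [H1 H2] i Hi; destruct (Nat.eq_dec i n) as [->|]; auto; apply H1; lia.
Qed.

Lemma collision_free_locally N c z : collision_free N z ->
  locally (get_coord c z) (fun t => collision_free N (set_coord c z t)).
Proof.
  intros Hz.
  apply filter_imp with (P := fun t => forall i, (i < N)%nat -> forall j, (j < N)%nat ->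
                                i <> j -> 0 < dist2 (set_coord c z t) i j);
    [intros t H i j Hi Hj Hij; apply H; auto |].
  apply locally_forall_lt; intros i Hi; apply locally_forall_lt; intros j Hj.
  destruct (Nat.eq_dec i j) as [->|Hne]; [apply filter_forall; intros t H; congruence |].
  eapply filter_imp; [intros t H _; exact H |].
  apply locally_pos_continuous.
  - exact (ex_derive_continuous _ _ (ex_derive_dist2 c z i j _)).
  - rewrite set_get_coord; apply Hz; auto.
Qed.

Lemma partial_ext_loc N c z (f g : PSfun) : collision_free N z ->
  (forall w, collision_free N w -> f w = g w) -> partial c f z = partial c g z.
Proof.
  intros Hz H; apply Derive_ext_loc.
  eapply filter_imp; [| apply (collision_free_locally N c z Hz)]; intros t Ht; apply H, Ht.
Qed.

Section SmoothFunctions.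
Variable N : nat.

Inductive smooth : PSfun -> Prop :=
| smooth_const r : smooth (fun _ => r)
| smooth_coord c : smooth (get_coord c)
| smooth_add f g : smooth f -> smooth g -> smooth (fun z => f z + g z)
| smooth_mul f g : smooth f -> smooth g -> smooth (fun z => f z * g z)
| smooth_rpower f r : smooth f -> (forall z, collision_free N z -> 0 < f z) ->
    smooth (fun z => Rpower (f z) r)
| smooth_ext f g : smooth f -> (forall z, collision_free N z -> f z = g z) -> smooth g.

Definition ex_partial (f : PSfun) := forall c z, collision_free N z ->
  ex_derive (fun t => f (set_coord c z t)) (get_coord c z).

Lemma is_derive_Rpower r x : 0 < x -> is_derive (fun y => Rpower y r) x (r * Rpower x (r - 1)).
Proof. intros Hx; apply is_derive_Reals, derivable_pt_lim_power, Hx. Qed.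

Lemma ex_derive_Rpower_comp r (f : PSfun) c z : 0 < f z ->
  ex_derive (fun t => f (set_coord c z t)) (get_coord c z) ->
  ex_derive (fun t => Rpower (f (set_coord c z t)) r) (get_coord c z).
Proof.
  intros Hp Hf; apply (ex_derive_comp (fun x => Rpower x r)); [| exact Hf].
  rewrite set_get_coord; eexists; apply is_derive_Rpower, Hp.
Qed.

Lemma smooth_ex_partial f : smooth f -> ex_partial f.
Proof.
  induction 1 as [r | c' | f g _ IHf _ IHg | f g _ IHf _ IHg | f r _ IHf Hpos | f g _ IHf Hfg];
    intros c z Hz.
  - apply ex_derive_const.
  - apply ex_derive_get_set_coord.
  - exact (ex_derive_plus _ _ _ (IHf c z Hz) (IHg c z Hz)).
  - apply ex_derive_mult; auto.
  - apply ex_derive_Rpower_comp; auto.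
  - eapply ex_derive_ext_loc; [| apply (IHf c z Hz)].
    eapply filter_imp; [| apply (collision_free_locally N c z Hz)]; intros t Ht; apply Hfg, Ht.
Qed.

Section PartialRules.
Variables (c : coord) (z : PS).
Hypothesis Hz : collision_free N z.

Lemma partial_plus f g : ex_partial f -> ex_partial g ->
  partial c (fun w => f w + g w) z = partial c f z + partial c g z.
Proof. intros Hf Hg; apply Derive_plus; auto. Qed.

Lemma partial_minus f g : ex_partial f -> ex_partial g ->
  partial c (fun w => f w - g w) z = partial c f z - partial c g z.
Proof. intros Hf Hg; apply Derive_minus; auto. Qed.

Lemma partial_mult f g : ex_partial f -> ex_partial g ->
  partial c (fun w => f w * g w) z = partial c f z * g z + f z * partial c g z.
Proof.
  intros Hf Hg; unfold partial; rewrite Derive_mult by auto.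
  rewrite set_get_coord; reflexivity.
Qed.

Lemma partial_scal r f : ex_partial f -> partial c (fun w => r * f w) z = r * partial c f z.
Proof.
  intros Hf; rewrite partial_mult, partial_const; [ring | | exact Hf].
  intros ? ? ?; apply ex_derive_const.
Qed.

Lemma partial_rpower f r : ex_partial f -> 0 < f z ->
  partial c (fun w => Rpower (f w) r) z = r * Rpower (f z) (r - 1) * partial c f z.
Proof.
  intros Hf Hp; unfold partial.
  rewrite (Derive_comp (fun x => Rpower x r)); [| rewrite set_get_coord; eexists;
                                                 apply is_derive_Rpower, Hp | apply Hf, Hz].
  rewrite set_get_coord.
  replace (Derive (fun x => Rpower x r) (f z)) with (r * Rpower (f z) (r - 1))
    by (symmetry; apply is_derive_unique, is_derive_Rpower, Hp).
  ring.
Qed.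

End PartialRules.

Local Hint Resolve smooth_ex_partial smooth_add smooth_mul smooth_const : smooth.

Lemma smooth_partial f : smooth f -> forall e, smooth (partial e f).
Proof.
  induction 1 as [r | c | f g Sf IHf Sg IHg | f g Sf IHf Sg IHg | f r Sf IHf Hpos | f g Sf IHf Hfg];
    intros e.
  - apply smooth_ext with (fun _ => 0); [apply smooth_const | intros; rewrite partial_const; auto].
  - destruct (partial_get_coord_const e c) as [r Hr].
    apply smooth_ext with (fun _ => r); [apply smooth_const | intros; rewrite Hr; auto].
  - apply smooth_ext with (fun z => partial e f z + partial e g z); auto with smooth.
    intros z Hz; rewrite partial_plus; auto with smooth.
  - apply smooth_ext with (fun z => partial e f z * g z + f z * partial e g z); auto with smooth.
    intros z Hz; rewrite partial_mult; auto with smooth.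
  - apply smooth_ext with (fun z => r * Rpower (f z) (r - 1) * partial e f z).
    + repeat apply smooth_mul; auto using smooth_const, smooth_rpower.
    + intros z Hz; rewrite partial_rpower; auto with smooth.
  - apply smooth_ext with (partial e f); auto.
    intros z Hz; apply (partial_ext_loc N); auto.
Qed.

Local Hint Resolve smooth_partial : smooth.

Definition partials_commute (f : PSfun) := forall e d z, collision_free N z ->
  partial e (partial d f) z = partial d (partial e f) z.

Lemma partials_commute_const_partials f :
  (forall d, exists r, forall w, partial d f w = r) -> partials_commute f.
Proof.
  intros H e d z _; destruct (H d) as [r1 H1], (H e) as [r2 H2].
  replace (partial d f) with (fun _ : PS => r1) by (extensionality w; auto).
  replace (partial e f) with (fun _ : PS => r2) by (extensionality w; auto).
  rewrite !partial_const; reflexivity.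
Qed.

Lemma partials_commute_add f g : smooth f -> smooth g ->
  partials_commute f -> partials_commute g -> partials_commute (fun z => f z + g z).
Proof.
  intros Sf Sg Cf Cg e d z Hz.
  assert (E : forall d w, collision_free N w ->
            partial d (fun z => f z + g z) w = partial d f w + partial d g w)
    by (intros; apply partial_plus; auto with smooth).
  rewrite (partial_ext_loc N e z _ _ Hz (E d)), (partial_ext_loc N d z _ _ Hz (E e)).
  rewrite !partial_plus, Cf, Cg; auto with smooth.
Qed.

Lemma partials_commute_mul f g : smooth f -> smooth g ->
  partials_commute f -> partials_commute g -> partials_commute (fun z => f z * g z).
Proof.
  intros Sf Sg Cf Cg e d z Hz.
  assert (E : forall d w, collision_free N w ->
            partial d (fun z => f z * g z) w = partial d f w * g w + f w * partial d g w)
    by (intros; apply partial_mult; auto with smooth).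
  rewrite (partial_ext_loc N e z _ _ Hz (E d)), (partial_ext_loc N d z _ _ Hz (E e)).
  rewrite !partial_plus, !partial_mult, Cf, Cg; auto with smooth; ring.
Qed.

Lemma partials_commute_rpower f r : smooth f -> (forall z, collision_free N z -> 0 < f z) ->
  partials_commute f -> partials_commute (fun z => Rpower (f z) r).
Proof.
  intros Sf Hpos Cf e d z Hz.
  set (g := fun w => r * Rpower (f w) (r - 1)).
  assert (Sg : smooth g) by (apply smooth_mul; auto using smooth_const, smooth_rpower).
  assert (E : forall d w, collision_free N w ->
            partial d (fun z => Rpower (f z) r) w = g w * partial d f w)
    by (intros; apply partial_rpower; auto with smooth).
  assert (Eg : forall d, partial d g z = r * ((r - 1) * Rpower (f z) (r - 1 - 1) * partial d f z)).
  { intros d'; unfold g; rewrite partial_scal, partial_rpower; auto with smooth.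
    intros ? ? ?; apply (smooth_ex_partial _ (smooth_rpower _ _ Sf Hpos)); auto. }
  rewrite (partial_ext_loc N e z _ _ Hz (E d)), (partial_ext_loc N d z _ _ Hz (E e)).
  rewrite !partial_mult, !Eg, Cf; auto with smooth; unfold g; ring.
Qed.

Lemma partials_commute_ext f g : partials_commute f ->
  (forall z, collision_free N z -> f z = g z) -> partials_commute g.
Proof.
  intros Cf Hfg e d z Hz.
  assert (E : forall d w, collision_free N w -> partial d g w = partial d f w)
    by (intros; apply (partial_ext_loc N); auto; intros; symmetry; auto).
  rewrite (partial_ext_loc N e z _ _ Hz (E d)), (partial_ext_loc N d z _ _ Hz (E e)); auto.
Qed.

Lemma smooth_partials_commute f : smooth f -> partials_commute f.
Proof.
  induction 1.
  - apply partials_commute_const_partials; intros d; exists 0; intros; apply partial_const.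
  - apply partials_commute_const_partials; intros d; apply partial_get_coord_const.
  - apply partials_commute_add; auto.
  - apply partials_commute_mul; auto.
  - apply partials_commute_rpower; auto.
  - eapply partials_commute_ext; eauto.
Qed.

Lemma smooth_minus f g : smooth f -> smooth g -> smooth (fun z => f z - g z).
Proof.
  intros Sf Sg; apply smooth_ext with (fun z => f z + (fun _ => -1) z * g z); auto with smooth.
  intros; ring.
Qed.

Lemma smooth_scal r f : smooth f -> smooth (fun z => r * f z).
Proof. intros Sf; apply (smooth_mul (fun _ => r)); auto with smooth. Qed.

Lemma smooth_rsum n (F : nat -> PSfun) : (forall i, (i < n)%nat -> smooth (F i)) ->
  smooth (fun z => rsum n (fun i => F i z)).
Proof.
  induction n; intros H.
  - apply smooth_ext with (fun _ => 0); [apply smooth_const | reflexivity].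
  - apply smooth_ext with (fun z => rsum n (fun i => F i z) + F n z).
    + apply smooth_add; [apply IHn; intros; apply H; lia | apply H; lia].
    + intros; rewrite rsum_S; reflexivity.
Qed.

Lemma partial_rsum c z n (F : nat -> PSfun) : collision_free N z ->
  (forall i, (i < n)%nat -> smooth (F i)) ->
  partial c (fun w => rsum n (fun i => F i w)) z = rsum n (fun i => partial c (F i) z).
Proof.
  induction n; intros Hz H; [apply (partial_const c z 0) |].
  rewrite (partial_ext_loc N c z _ (fun w => rsum n (fun i => F i w) + F n w))
    by (auto; intros; apply rsum_S).
  rewrite partial_plus, IHn, rsum_S; auto; try (intros; apply H; lia).
  - apply smooth_ex_partial, smooth_rsum; intros; apply H; lia.
  - apply smooth_ex_partial, H; lia.
Qed.

End SmoothFunctions.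

Local Hint Resolve smooth_ex_partial smooth_partial smooth_add smooth_mul smooth_const : smooth.

(** * The Poisson bracket *)

Section PoissonBracket.
Variable N : nat.
Implicit Types A B C X Y Z : PSfun.

Lemma pb_partial A B z : pb N A B z =
  rsum N (fun i => rsum 3 (fun a =>
    partial (xc i a) A z * partial (pc i a) B z - partial (pc i a) A z * partial (xc i a) B z)).
Proof. reflexivity. Qed.

Lemma smooth_pb A B : smooth N A -> smooth N B -> smooth N (pb N A B).
Proof.
  intros SA SB; apply smooth_ext with (2 := fun z _ => eq_sym (pb_partial A B z)).
  apply smooth_rsum; intros i _; apply smooth_rsum; intros a _.
  apply smooth_minus; auto with smooth.
Qed.

Lemma pb_ext_loc A A' B B' z : collision_free N z ->
  (forall w, collision_free N w -> A w = A' w) -> (forall w, collision_free N w -> B w = B' w) ->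
  pb N A B z = pb N A' B' z.
Proof.
  intros Hz HA HB; rewrite !pb_partial.
  apply rsum_ext; intros i _; apply rsum_ext; intros a _.
  rewrite (partial_ext_loc N (xc i a) z A A'), (partial_ext_loc N (pc i a) z A A'),
          (partial_ext_loc N (xc i a) z B B'), (partial_ext_loc N (pc i a) z B B'); auto.
Qed.

Lemma pb_anti A B z : pb N A B z = - pb N B A z.
Proof.
  rewrite !pb_partial, rsum_opp; apply rsum_ext; intros i _.
  rewrite rsum_opp; apply rsum_ext; intros a _; ring.
Qed.

Lemma pb_addr A B B' z : smooth N B -> smooth N B' -> collision_free N z ->
  pb N A (fun w => B w + B' w) z = pb N A B z + pb N A B' z.
Proof.
  intros SB SB' Hz; rewrite !pb_partial, <- rsum_plus; apply rsum_ext; intros i _.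
  rewrite <- rsum_plus; apply rsum_ext; intros a _.
  rewrite !(partial_plus N) by auto with smooth; ring.
Qed.

Lemma pb_scalr r A B z : smooth N B -> collision_free N z ->
  pb N A (fun w => r * B w) z = r * pb N A B z.
Proof.
  intros SB Hz; rewrite !pb_partial, <- rsum_scal; apply rsum_ext; intros i _.
  rewrite <- rsum_scal; apply rsum_ext; intros a _.
  rewrite !(partial_scal N) by auto with smooth; ring.
Qed.

Lemma partial_pb c A B z : smooth N A -> smooth N B -> collision_free N z ->
  partial c (pb N A B) z = rsum N (fun j => rsum 3 (fun b =>
    (partial c (partial (xc j b) A) z * partial (pc j b) B z
       + partial (xc j b) A z * partial c (partial (pc j b) B) z)
    - (partial c (partial (pc j b) A) z * partial (xc j b) B z
       + partial (pc j b) A z * partial c (partial (xc j b) B) z))).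
Proof.
  intros SA SB Hz.
  set (F := fun j b w => partial (xc j b) A w * partial (pc j b) B w
                         - partial (pc j b) A w * partial (xc j b) B w).
  assert (SF : forall j b, smooth N (F j b)) by (intros; apply smooth_minus; auto with smooth).
  change (pb N A B) with (fun w => rsum N (fun j => (fun j w => rsum 3 (fun b => F j b w)) j w)).
  rewrite (partial_rsum N) by (auto; intros; apply (smooth_rsum N 3 (fun b => F _ b)); auto).
  apply rsum_ext; intros j _.
  rewrite (partial_rsum N c z 3 (F j)) by auto.
  apply rsum_ext; intros b _; unfold F.
  rewrite (partial_minus N), !(partial_mult N); auto with smooth.
Qed.

Definition sum4 (F : nat -> nat -> nat -> nat -> R) : R :=
  rsum N (fun i => rsum 3 (fun a => rsum N (fun j => rsum 3 (fun b => F i a j b)))).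

Lemma sum4_plus F G : sum4 (fun i a j b => F i a j b + G i a j b) = sum4 F + sum4 G.
Proof.
  unfold sum4; rewrite <- rsum_plus; apply rsum_ext; intros.
  rewrite <- rsum_plus; apply rsum_ext; intros.
  rewrite <- rsum_plus; apply rsum_ext; intros.
  rewrite <- rsum_plus; reflexivity.
Qed.

Lemma sum4_zero F : (forall i a j b, (i < N)%nat -> (a < 3)%nat -> (j < N)%nat -> (b < 3)%nat ->
  F i a j b = 0) -> sum4 F = 0.
Proof.
  intros H; unfold sum4; apply rsum_zero; intros; apply rsum_zero; intros;
    apply rsum_zero; intros; apply rsum_zero; intros; auto.
Qed.

Lemma sum4_swap F : sum4 F = sum4 (fun i a j b => F j b i a).
Proof.
  unfold sum4.
  transitivity (rsum N (fun i => rsum N (fun j => rsum 3 (fun a => rsum 3 (fun b => F i a j b)))));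
    [apply rsum_ext; intros; apply rsum_swap |].
  rewrite rsum_swap; apply rsum_ext; intros j _.
  transitivity (rsum N (fun i => rsum 3 (fun b => rsum 3 (fun a => F i a j b))));
    [apply rsum_ext; intros; apply rsum_swap |].
  apply rsum_swap.
Qed.

(* The terms of {{X,Y},Z} with a second derivative of X, resp. of Y. *)
Definition pb2_dd_left X Y Z z i a j b :=
    partial (xc i a) (partial (xc j b) X) z * partial (pc j b) Y z * partial (pc i a) Z z
  - partial (xc i a) (partial (pc j b) X) z * partial (xc j b) Y z * partial (pc i a) Z z
  - partial (pc i a) (partial (xc j b) X) z * partial (pc j b) Y z * partial (xc i a) Z z
  + partial (pc i a) (partial (pc j b) X) z * partial (xc j b) Y z * partial (xc i a) Z z.
Definition pb2_dd_right X Y Z z i a j b :=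
    partial (xc j b) X z * partial (xc i a) (partial (pc j b) Y) z * partial (pc i a) Z z
  - partial (pc j b) X z * partial (xc i a) (partial (xc j b) Y) z * partial (pc i a) Z z
  - partial (xc j b) X z * partial (pc i a) (partial (pc j b) Y) z * partial (xc i a) Z z
  + partial (pc j b) X z * partial (pc i a) (partial (xc j b) Y) z * partial (xc i a) Z z.

Lemma pb_pb_expand X Y Z z : smooth N X -> smooth N Y -> collision_free N z ->
  pb N (pb N X Y) Z z = sum4 (pb2_dd_left X Y Z z) + sum4 (pb2_dd_right X Y Z z).
Proof.
  intros SX SY Hz; rewrite <- sum4_plus, pb_partial; unfold sum4.
  apply rsum_ext; intros i _; apply rsum_ext; intros a _.
  rewrite !partial_pb by auto; rewrite !rsum_mult_r, <- rsum_minus.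
  apply rsum_ext; intros j _; rewrite !rsum_mult_r, <- rsum_minus.
  apply rsum_ext; intros b _; unfold pb2_dd_left, pb2_dd_right; ring.
Qed.

(* Each second derivative of X occurs once in {{X,Y},Z} and once, with the opposite sign,
   in {{Z,X},Y}. *)
Lemma pb2_dd_cancel X Y Z z : smooth N X -> collision_free N z ->
  sum4 (pb2_dd_left X Y Z z) + sum4 (pb2_dd_right Z X Y z) = 0.
Proof.
  intros SX Hz; rewrite (sum4_swap (pb2_dd_right Z X Y z)), <- sum4_plus.
  apply sum4_zero; intros i a j b _ _ _ _; unfold pb2_dd_left, pb2_dd_right.
  rewrite !(smooth_partials_commute N X SX (xc j b)), !(smooth_partials_commute N X SX (pc j b))
    by auto.
  ring.
Qed.

Lemma pb_jacobi A B C z : smooth N A -> smooth N B -> smooth N C -> collision_free N z ->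
  pb N (pb N A B) C z + pb N (pb N B C) A z + pb N (pb N C A) B z = 0.
Proof.
  intros SA SB SC Hz; rewrite !pb_pb_expand by auto.
  pose proof (pb2_dd_cancel A B C z SA Hz); pose proof (pb2_dd_cancel B C A z SB Hz);
  pose proof (pb2_dd_cancel C A B z SC Hz); lra.
Qed.

Lemma pb_eq0_indep A B z :
  (forall i a, partial (xc i a) A z = 0 \/ partial (pc i a) B z = 0) ->
  (forall i a, partial (pc i a) A z = 0 \/ partial (xc i a) B z = 0) ->
  pb N A B z = 0.
Proof.
  intros H1 H2; rewrite pb_partial; apply rsum_zero; intros i _; apply rsum_zero; intros a _.
  destruct (H1 i a) as [E1|E1], (H2 i a) as [E2|E2]; rewrite E1, E2; ring.
Qed.

Definition mom_only (F : PSfun) := forall X X' P : nat -> nat -> R, F (X, P) = F (X', P).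
Definition pos_only (F : PSfun) := forall X P P' : nat -> nat -> R, F (X, P) = F (X, P').

Lemma partial_x_mom_only F i a z : mom_only F -> partial (xc i a) F z = 0.
Proof. intros H; apply partial_indep; intros t; destruct z; apply H. Qed.

Lemma partial_p_pos_only F i a z : pos_only F -> partial (pc i a) F z = 0.
Proof. intros H; apply partial_indep; intros t; destruct z; apply H. Qed.

Lemma pb_mom_only A B z : mom_only A -> mom_only B -> pb N A B z = 0.
Proof.
  intros HA HB; apply pb_eq0_indep; intros; [left | right]; apply partial_x_mom_only; auto.
Qed.

Lemma pb_pos_only A B z : pos_only A -> pos_only B -> pb N A B z = 0.
Proof.
  intros HA HB; apply pb_eq0_indep; intros; [right | left]; apply partial_p_pos_only; auto.
Qed.

End PoissonBracket.

(** * The Lie algebra of smooth functions off collisions *)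

Section SmoothLie.
Variable N : nat.

(* Vanishing off collisions is a normal form: equality on the collision-free set, which is
   all the bracket sees, becomes equality. *)
Definition sfun := {f : PSfun | smooth N f /\ forall z, ~ collision_free N z -> f z = 0}.
Definition sval (x : sfun) : PSfun := proj1_sig x.

Lemma sval_smooth x : smooth N (sval x).
Proof. exact (proj1 (proj2_sig x)). Qed.

Lemma sval_off x z : ~ collision_free N z -> sval x z = 0.
Proof. exact (proj2 (proj2_sig x) z). Qed.

Lemma sval_inj x y : (forall z, sval x z = sval y z) -> x = y.
Proof.
  destruct x as [f Hf], y as [g Hg]; simpl; intros H.
  assert (f = g) as <- by (extensionality z; auto).
  f_equal; apply proof_irrelevance.
Qed.

Definition restrict (F : PSfun) : PSfun := fun z =>
  if excluded_middle_informative (collision_free N z) then F z else 0.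

Lemma restrict_prop F : smooth N F ->
  smooth N (restrict F) /\ forall z, ~ collision_free N z -> restrict F z = 0.
Proof.
  intros H; unfold restrict; split.
  - apply smooth_ext with F; auto.
    intros z Hz; destruct (excluded_middle_informative (collision_free N z)); tauto.
  - intros z Hz; destruct (excluded_middle_informative (collision_free N z)); tauto.
Qed.

Definition sf_zero : sfun := exist _ (fun _ => 0) (conj (smooth_const N 0) (fun _ _ => eq_refl)).

(* Non-smooth functions are sent to 0; only smooth ones are ever embedded. *)
Definition embed (F : PSfun) : sfun :=
  match excluded_middle_informative (smooth N F) with
  | left H => exist _ (restrict F) (restrict_prop F H)
  | right _ => sf_zero
  end.

Lemma embed_val F z : smooth N F -> collision_free N z -> sval (embed F) z = F z.
Proof.
  intros H Hz; unfold embed; destruct (excluded_middle_informative (smooth N F)); [| tauto].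
  simpl; unfold restrict; destruct (excluded_middle_informative (collision_free N z)); tauto.
Qed.

Lemma embed_off F z : ~ collision_free N z -> sval (embed F) z = 0.
Proof.
  intros Hz; unfold embed; destruct (excluded_middle_informative (smooth N F)); simpl; auto.
  unfold restrict; destruct (excluded_middle_informative (collision_free N z)); tauto.
Qed.

Definition sf_add (x y : sfun) : sfun.
Proof.
  refine (exist _ (fun z => sval x z + sval y z) _); split.
  - apply smooth_add; apply sval_smooth.
  - intros z Hz; rewrite !sval_off by auto; ring.
Defined.

Definition sf_scal (r : R) (x : sfun) : sfun.
Proof.
  refine (exist _ (fun z => r * sval x z) _); split.
  - apply smooth_scal, sval_smooth.
  - intros z Hz; rewrite sval_off by auto; ring.
Defined.

Definition sf_br (x y : sfun) : sfun := embed (pb N (sval y) (sval x)).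

Lemma sf_br_val x y z : collision_free N z -> sval (sf_br x y) z = pb N (sval y) (sval x) z.
Proof. intros Hz; apply embed_val; auto; apply smooth_pb; apply sval_smooth. Qed.

Ltac on_collision_free z := destruct (classic (collision_free N z)) as [Hz|Hz];
  [| unfold sf_br; rewrite ?embed_off by auto; simpl; rewrite ?embed_off by auto; ring].

Lemma sf_br_addl x y w : sf_br (sf_add x y) w = sf_add (sf_br x w) (sf_br y w).
Proof.
  apply sval_inj; intro z; on_collision_free z.
  simpl; rewrite !sf_br_val by auto; apply pb_addr; auto; apply sval_smooth.
Qed.

Lemma sf_br_scall r x w : sf_br (sf_scal r x) w = sf_scal r (sf_br x w).
Proof.
  apply sval_inj; intro z; on_collision_free z.
  simpl; rewrite !sf_br_val by auto; apply pb_scalr; auto; apply sval_smooth.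
Qed.

Lemma sf_br_anti z x y : sval (sf_br x y) z = - sval (sf_br y x) z.
Proof. on_collision_free z. rewrite !sf_br_val by auto; apply pb_anti. Qed.

Lemma sf_br_jacobi z x y w :
  sval (sf_br x (sf_br y w)) z + sval (sf_br y (sf_br w x)) z + sval (sf_br w (sf_br x y)) z = 0.
Proof.
  on_collision_free z.
  assert (E : forall a b c, pb N (sval (sf_br b c)) (sval a) z
                            = pb N (pb N (sval c) (sval b)) (sval a) z)
    by (intros; apply pb_ext_loc; auto; intros; apply sf_br_val; auto).
  rewrite !sf_br_val, !E by auto.
  pose proof (pb_jacobi N (sval w) (sval y) (sval x) z
                (sval_smooth w) (sval_smooth y) (sval_smooth x) Hz); lra.
Qed.

Definition smooth_lie : EvLie := {|
  carrier := sfun; ladd := sf_add; lscal := sf_scal; lzero := sf_zero; lbr := sf_br;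
  point := PS; ev := fun z x => sval x z;
  ev_add := fun _ _ _ => eq_refl; ev_scal := fun _ _ _ => eq_refl; ev_zero := fun _ => eq_refl;
  ev_inj := sval_inj; lbr_addl := sf_br_addl; lbr_scall := sf_br_scall;
  ev_lbr_anti := sf_br_anti; ev_jacobi := sf_br_jacobi |}.

Lemma ev_lbr_lbr_pb (x y w : smooth_lie) F G H z : collision_free N z ->
  (forall v, collision_free N v -> sval x v = F v) ->
  (forall v, collision_free N v -> sval y v = G v) ->
  (forall v, collision_free N v -> sval w v = H v) ->
  @ev smooth_lie z (lbr x (lbr y w)) = pb N (pb N H G) F z.
Proof.
  intros Hz Hx Hy Hw; simpl; rewrite sf_br_val by auto.
  apply pb_ext_loc; auto; intros v Hv; rewrite sf_br_val by auto; apply pb_ext_loc; auto.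
Qed.

End SmoothLie.

(** * The N-body Hamiltonian *)

Section NBody.
Variables (N : nat) (G : R) (m : nat -> R).

Definition valid_pair (p : nat * nat) := (fst p < N)%nat /\ (snd p < N)%nat /\ fst p <> snd p.

Lemma smooth_Ti i : smooth N (Ti m i).
Proof.
  apply smooth_ext with (fun z => rsum 3 (fun a => get_coord (pc i a) z * get_coord (pc i a) z)
                                  * / (2 * m i)).
  - apply (smooth_mul N _ (fun _ => _)); auto with smooth.
    apply (smooth_rsum N 3 (fun a z => get_coord (pc i a) z * get_coord (pc i a) z)).
    intros; apply smooth_mul; apply smooth_coord.
  - intros z _; unfold Ti, Rdiv; f_equal; apply rsum_ext; intros; simpl; ring.
Qed.

Lemma smooth_Ttot : smooth N (Ttot N m).
Proof. apply (smooth_rsum N N (Ti m)); intros; apply smooth_Ti. Qed.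

Lemma smooth_Tpair p : smooth N (Tpair m p).
Proof. apply smooth_add; apply smooth_Ti. Qed.

Lemma smooth_dist2 i j : smooth N (fun z => dist2 z i j).
Proof.
  apply (smooth_rsum N 3 (fun a z => (fst z i a - fst z j a) ^ 2)); intros a _.
  apply smooth_ext with (fun z => (get_coord (xc i a) z - get_coord (xc j a) z)
                                  * (get_coord (xc i a) z - get_coord (xc j a) z)).
  - apply smooth_mul; apply smooth_minus; apply smooth_coord.
  - intros; simpl; ring.
Qed.

Lemma smooth_Vij i j : valid_pair (i, j) -> smooth N (Vij G m i j).
Proof.
  intros [Hi [Hj Hij]]; simpl in *.
  apply smooth_ext with (fun z => - G * m i * m j * Rpower (dist2 z i j) (- / 2)).
  - apply (smooth_mul N (fun _ => _)); auto with smooth.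
    apply smooth_rpower; [apply smooth_dist2 | intros z Hz; apply Hz; auto].
  - intros z Hz; unfold Vij, Rdiv; f_equal.
    rewrite Rpower_Ropp, Rpower_sqrt by (apply Hz; auto); reflexivity.
Qed.

Lemma smooth_Vtot : smooth N (Vtot N G m).
Proof.
  apply (smooth_rsum N N (fun i z => rsum N (fun j => if Nat.ltb i j then Vij G m i j z else 0))).
  intros i Hi; apply (smooth_rsum N N (fun j z => if Nat.ltb i j then Vij G m i j z else 0)).
  intros j Hj; destruct (Nat.ltb_spec i j); [apply smooth_Vij; repeat split; simpl; lia |].
  apply smooth_const.
Qed.

Lemma smooth_Vs S : (forall p, In p S -> valid_pair p) -> smooth N (Vs G m S).
Proof.
  induction S as [|p S IH]; intros H.
  - exact (smooth_const N 0).
  - apply (smooth_add N (Vij G m (fst p) (snd p)) (Vs G m S)).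
    + destruct p; apply smooth_Vij, H; simpl; auto.
    + apply IH; intros; apply H; simpl; auto.
Qed.

Lemma smooth_Vc S : (forall p, In p S -> valid_pair p) -> smooth N (Vc N G m S).
Proof. intros H; apply smooth_minus; [apply smooth_Vtot | apply smooth_Vs, H]. Qed.

Lemma smooth_Hn p : valid_pair p -> smooth N (Hn G m p).
Proof. intros H; apply smooth_add; [apply smooth_Tpair | destruct p; apply smooth_Vij, H]. Qed.

Definition Trest (p : nat * nat) : PSfun := fun z =>
  rsum N (fun i => if (Nat.eqb i (fst p) || Nat.eqb i (snd p))%bool then 0 else Ti m i z).

Lemma smooth_Trest p : smooth N (Trest p).
Proof.
  apply (smooth_rsum N N
    (fun i z => if (Nat.eqb i (fst p) || Nat.eqb i (snd p))%bool then 0 else Ti m i z)).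
  intros i _; destruct (Nat.eqb i (fst p) || Nat.eqb i (snd p))%bool;
    [apply smooth_const | apply smooth_Ti].
Qed.

Lemma Ttot_split p z : valid_pair p -> Ttot N m z = Tpair m p z + Trest p z.
Proof.
  intros [H1 [H2 H3]]; unfold Ttot, Tpair, fadd, Trest.
  rewrite (rsum_split N (fst p)), (rsum_split N (snd p)) by auto.
  rewrite (rsum_ext N
    (fun i => if Nat.eqb i (snd p) then 0 else if Nat.eqb i (fst p) then 0 else Ti m i z)
    (fun i => if (Nat.eqb i (fst p) || Nat.eqb i (snd p))%bool then 0 else Ti m i z))
    by (intros i _; destruct (Nat.eqb i (fst p)), (Nat.eqb i (snd p)); reflexivity).
  destruct (Nat.eqb_spec (snd p) (fst p)); [lia | ring].
Qed.

Lemma Trest_indep_p p l X P a t : l = fst p \/ l = snd p ->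
  Trest p (X, upd P l a t) = Trest p (X, P).
Proof.
  intros Hl; unfold Trest; apply rsum_ext; intros i _.
  destruct (Nat.eqb_spec i (fst p)), (Nat.eqb_spec i (snd p)); simpl; auto.
  unfold Ti; simpl; f_equal; apply rsum_ext; intros b _; unfold upd.
  destruct (Nat.eqb_spec i l); [lia | reflexivity].
Qed.

Lemma Vij_indep_x i j l X P a t : l <> i -> l <> j ->
  Vij G m i j (upd X l a t, P) = Vij G m i j (X, P).
Proof.
  intros Hi Hj; unfold Vij, Defs.dist; simpl; do 2 f_equal; apply rsum_ext; intros b _.
  unfold upd; destruct (Nat.eqb_spec i l), (Nat.eqb_spec j l); try lia; reflexivity.
Qed.

Lemma pb_Trest_Vij p z : pb N (Trest p) (Vij G m (fst p) (snd p)) z = 0.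
Proof.
  apply pb_eq0_indep; intros i a; [left; apply partial_x_mom_only; intros ? ? ?; reflexivity |].
  destruct z as [X P].
  destruct (Nat.eq_dec i (fst p)); [| destruct (Nat.eq_dec i (snd p))];
    [left | left | right]; apply partial_indep; intros t; simpl.
  - apply Trest_indep_p; auto.
  - apply Trest_indep_p; auto.
  - apply Vij_indep_x; auto.
Qed.

End NBody.

Section Embedding.
Variable N : nat.

Lemma embed_add F F1 F2 : smooth N F -> smooth N F1 -> smooth N F2 ->
  (forall z, collision_free N z -> F z = F1 z + F2 z) ->
  embed N F = @ladd (smooth_lie N) (embed N F1) (embed N F2).
Proof.
  intros HF HF1 HF2 H; apply sval_inj; intro z; simpl.
  destruct (classic (collision_free N z)) as [Hz|Hz].
  - rewrite !embed_val by auto; auto.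
  - rewrite !embed_off by auto; ring.
Qed.

Lemma lbr_embed_eq0 F1 F2 : smooth N F1 -> smooth N F2 ->
  (forall z, collision_free N z -> pb N F2 F1 z = 0) ->
  @lbr (smooth_lie N) (embed N F1) (embed N F2) = lzero.
Proof.
  intros HF1 HF2 H; apply sval_inj; intro z; simpl.
  destruct (classic (collision_free N z)) as [Hz|Hz].
  - rewrite sf_br_val by auto.
    rewrite (pb_ext_loc N _ F2 _ F1) by (auto; intros; apply embed_val; auto); auto.
  - unfold sf_br; rewrite embed_off; auto.
Qed.

Definition represents (A : series) (a : lser (smooth_lie N)) :=
  forall k z, collision_free N z -> A k z = sval N (a k) z.

Lemma sval_lie_sum n (f : nat -> smooth_lie N) z :
  sval N (lie_sum n f) z = rsum n (fun j => sval N (f j) z).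
Proof.
  unfold lie_sum, rsum; generalize (seq 0 n); intros l.
  induction l as [|j l IH]; simpl; [reflexivity | rewrite <- IH; reflexivity].
Qed.

Lemma represents_sbr A B a b : represents A a -> represents B b ->
  represents (sbr N A B) (lsbr a b).
Proof.
  intros HA HB k z Hz; unfold sbr, lsbr; rewrite sval_lie_sum.
  apply rsum_ext; intros j _; simpl; rewrite sf_br_val by auto; apply pb_ext_loc; auto.
Qed.

Lemma represents_bch A B a b : represents A a -> represents B b ->
  represents (bch N A B) (lbch a b).
Proof.
  intros HA HB k z Hz; pose proof (represents_sbr _ _ _ _ HA HB) as HAB.
  unfold bch, lbch, sadd, lsadd, sscal, lsscal; simpl.
  rewrite HA, HB, HAB, (represents_sbr _ _ _ _ HA HAB), (represents_sbr _ _ _ _ HB HAB),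
          (represents_sbr _ _ _ _ HB (represents_sbr _ _ _ _ HA HAB)) by auto.
  reflexivity.
Qed.

Lemma represents_mono c F (f : smooth_lie N) :
  (forall z, collision_free N z -> F z = sval N f z) -> represents (mono c F) (lmono (c *l f)).
Proof.
  intros H k z Hz; unfold mono, lmono; destruct (Nat.eqb k 1); simpl; auto.
  unfold fscal; rewrite H; auto.
Qed.

Lemma bchl_represents l1 l2 : Forall2 represents l1 l2 -> represents (bchl N l1) (lbchl l2).
Proof.
  unfold bchl, lbchl; intros H.
  assert (H0 : represents szero lszero) by (intros k z _; reflexivity).
  revert H0; generalize (@lszero (smooth_lie N)) szero.
  induction H; intros a A HA; simpl; auto.
  apply IHForall2, represents_bch; auto.
Qed.

End Embedding.

Lemma rev_flat_map {X Y : Type} (f : X -> list Y) (l : list X) :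
  rev (flat_map f l) = flat_map (fun x => rev (f x)) (rev l).
Proof.
  induction l as [|x l IH]; simpl; auto.
  rewrite rev_app_distr, IH, flat_map_app; simpl; rewrite app_nil_r; reflexivity.
Qed.

Lemma Forall2_flat_map_map {X A B C : Type} (P : A -> C -> Prop) (f : X -> list A) (g : X -> list B)
  (h : B -> C) (l : list X) : (forall x, In x l -> Forall2 P (f x) (map h (g x))) ->
  Forall2 P (flat_map f l) (map h (flat_map g l)).
Proof.
  induction l as [|x l IH]; intros H; simpl; [constructor |].
  rewrite map_app; apply Forall2_app; [apply H | apply IH; intros; apply H]; simpl; auto.
Qed.

(** * The [DKB]^2 scheme *)

Section NBodyElements.
Variables (N : nat) (G : R) (m : nat -> R).

Definition eT : smooth_lie N := embed N (Ttot N m).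
Definition eVc S : smooth_lie N := embed N (Vc N G m S).
Definition eTpair p : smooth_lie N := embed N (Tpair m p).
Definition eHn p : smooth_lie N := embed N (Hn G m p).
Definition eV p : smooth_lie N := embed N (Vij G m (fst p) (snd p)).
Definition eTrest p : smooth_lie N := embed N (Trest N m p).

Lemma eHn_split p : valid_pair N p -> eHn p = eTpair p +l eV p.
Proof.
  intros Hp; destruct p; apply embed_add; auto using smooth_Hn, smooth_Tpair, smooth_Vij.
Qed.

Lemma eT_split p : valid_pair N p -> eT = eTpair p +l eTrest p.
Proof.
  intros Hp; apply embed_add; auto using smooth_Ttot, smooth_Tpair, smooth_Trest.
  intros; apply Ttot_split, Hp.
Qed.

Lemma lbr_eTrest_eV p : valid_pair N p -> lbr (eTrest p) (eV p) = lzero.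
Proof.
  intros Hp; apply lbr_embed_eq0; [apply smooth_Trest | destruct p; apply smooth_Vij, Hp |].
  intros z _; rewrite pb_anti, pb_Trest_Vij; ring.
Qed.

Lemma lbr_eTrest_eTpair p : lbr (eTrest p) (eTpair p) = lzero.
Proof.
  apply lbr_embed_eq0; [apply smooth_Trest | apply smooth_Tpair |].
  intros z _; apply pb_mom_only; intros ? ? ?; reflexivity.
Qed.

Lemma lbr_eV_eV p q : valid_pair N p -> valid_pair N q -> lbr (eV p) (eV q) = lzero.
Proof.
  intros Hp Hq; destruct p, q; apply lbr_embed_eq0; try (apply smooth_Vij; auto).
  intros z _; apply pb_pos_only; intros ? ? ?; reflexivity.
Qed.

Lemma lbr_eVc_eV S q : (forall p, In p S -> valid_pair N p) -> valid_pair N q ->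
  lbr (eVc S) (eV q) = lzero.
Proof.
  intros HS Hq; destruct q; apply lbr_embed_eq0; [apply smooth_Vc, HS | apply smooth_Vij, Hq |].
  intros z _; apply pb_pos_only; intros ? ? ?; reflexivity.
Qed.

Lemma sval_lie_lsum_eV S z : (forall p, In p S -> valid_pair N p) -> collision_free N z ->
  sval N (lie_lsum eV S) z = Vs G m S z.
Proof.
  induction S as [|p S IH]; intros HS Hz; [reflexivity |].
  simpl; rewrite IH by (auto; intros; apply HS; simpl; auto).
  unfold eV; rewrite embed_val; auto; destruct p; apply smooth_Vij, HS; simpl; auto.
Qed.

Lemma sval_lie_lsum_ad2 S z : (forall p, In p S -> valid_pair N p) -> collision_free N z ->
  sval N (lie_lsum_ad2 eV eT S) z =
  lsum S (fun p => pb N (pb N (Ttot N m) (Vij G m (fst p) (snd p))) (Vij G m (fst p) (snd p)) z).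
Proof.
  induction S as [|p S IH]; intros HS Hz; [reflexivity |].
  assert (Hp : valid_pair N p) by (apply HS; simpl; auto).
  change (sval N (lie_lsum_ad2 eV eT S) z + @ev (smooth_lie N) z (lbr (eV p) (lbr (eV p) eT))
          = pb N (pb N (Ttot N m) (Vij G m (fst p) (snd p))) (Vij G m (fst p) (snd p)) z
            + lsum S (fun p => pb N (pb N (Ttot N m) (Vij G m (fst p) (snd p)))
                                   (Vij G m (fst p) (snd p)) z)).
  rewrite IH, (ev_lbr_lbr_pb N _ _ _ (Vij G m (fst p) (snd p)) (Vij G m (fst p) (snd p)) (Ttot N m))
    by (auto; try (intros; apply HS; simpl; auto);
        intros; apply embed_val; auto using smooth_Ttot; destruct p; apply smooth_Vij, Hp).
  ring.
Qed.

Definition dkb_word S : list (smooth_lie N) :=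
  (1/2) *l eT :: (1/2) *l eVc S :: dkb_blocks eTpair eHn S.

Section Word.
Variable S : list (nat * nat).
Hypothesis HS : forall p, In p S -> valid_pair N p.

Lemma DKB2_factors_represented :
  Forall2 (represents N) (DKB2_factors N G m S) (map lmono (dkb_word S ++ rev (dkb_word S))).
Proof.
  assert (HT : forall z, collision_free N z -> Ttot N m z = sval N eT z)
    by (intros; symmetry; apply embed_val; auto using smooth_Ttot).
  assert (HV : forall z, collision_free N z -> Vc N G m S z = sval N (eVc S) z)
    by (intros; symmetry; apply embed_val; auto using smooth_Vc).
  assert (HP : forall p z, collision_free N z -> Tpair m p z = sval N (eTpair p) z)
    by (intros; symmetry; apply embed_val; auto using smooth_Tpair).
  assert (HH : forall p, In p S -> forall z, collision_free N z -> Hn G m p z = sval N (eHn p) z)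
    by (intros; symmetry; apply embed_val; auto using smooth_Hn).
  unfold DKB2_factors, dkb_word, dkb_blocks.
  simpl; rewrite rev_flat_map, <- !app_assoc, !map_app.
  do 2 (constructor; [apply represents_mono; auto |]).
  apply Forall2_app; [apply Forall2_flat_map_map; intros p Hp |].
  { repeat constructor; apply represents_mono; auto. }
  apply Forall2_app; [apply Forall2_flat_map_map; intros p Hp; apply in_rev in Hp |].
  all: repeat constructor; apply represents_mono; auto.
Qed.

Lemma pal1_dkb_blocks_eV : pal1 (dkb_blocks eTpair eHn S) = lie_lsum eV S.
Proof. apply pal1_dkb_blocks; intros; apply eHn_split; auto. Qed.

Lemma sval_pal1_dkb_word z : collision_free N z -> sval N (pal1 (dkb_word S)) z = Htot N G m z.
Proof.
  intros Hz; unfold dkb_word; simpl pal1; rewrite pal1_dkb_blocks_eV; simpl.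
  unfold eT, eVc; rewrite !embed_val, sval_lie_lsum_eV; auto using smooth_Ttot, smooth_Vc.
  unfold Htot, fadd, Vc, fsub; lra.
Qed.

Lemma sval_pal3_dkb_word z : collision_free N z -> sval N (pal3 (dkb_word S)) z = Err2 N G m S z.
Proof.
  intros Hz.
  assert (HT : forall v, collision_free N v -> sval N eT v = Ttot N m v)
    by (intros; apply embed_val; auto using smooth_Ttot).
  assert (HV : forall v, collision_free N v -> sval N (eVc S) v = Vc N G m S v)
    by (intros; apply embed_val; auto using smooth_Vc).
  assert (HVs : forall v, collision_free N v -> sval N (lie_lsum eV S) v = Vs G m S v)
    by (intros; apply sval_lie_lsum_eV; auto).
  change (sval N (pal3 (dkb_word S)) z) with (@ev (smooth_lie N) z (pal3 (dkb_word S))).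
  unfold dkb_word; rewrite (ev_pal3_dkb eT (eVc S) (lie_lsum eV S) (lie_lsum_ad2 eV eT S)).
  - rewrite !(ev_lbr_lbr_pb N _ _ _ (Ttot N m) (Ttot N m) (Vc N G m S)),
            !(ev_lbr_lbr_pb N _ _ _ (Vc N G m S) (Vc N G m S) (Ttot N m)),
            !(ev_lbr_lbr_pb N _ _ _ (Vc N G m S) (Vs G m S) (Ttot N m)),
            !(ev_lbr_lbr_pb N _ _ _ (Vs G m S) (Vs G m S) (Ttot N m)) by auto.
    simpl; rewrite sval_lie_lsum_ad2 by auto.
    unfold Err2, pb3; ring.
  - apply lbr_lie_lsum_eq0; intros; apply lbr_eVc_eV; auto.
  - apply pal1_dkb_blocks_eV.
  - apply pal3_dkb_blocks with (trf := eTrest);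
      auto using eHn_split, eT_split, lbr_eTrest_eV, lbr_eTrest_eTpair, lbr_eV_eV.
Qed.

End Word.
End NBodyElements.

Theorem mainTheorem6 (N : nat) (G : R) (m : nat -> R) (S : list (nat * nat)) :
  0 < G ->
  (forall i, (i < N)%nat -> 0 < m i) ->
  (forall p, In p S -> (fst p < N)%nat /\ (snd p < N)%nat /\ fst p <> snd p) ->
  NoDup (map (fun p => (Nat.min (fst p) (snd p), Nat.max (fst p) (snd p))) S) ->
  forall z : PS, noncoll N z ->
  forall k : nat, (k <= 4)%nat ->
    bchl N (DKB2_factors N G m S) k z = target N G m S k z.
Proof.
  intros _ _ HS _ z Hnc k Hk.
  pose proof (noncoll_collision_free N z Hnc) as Hz.
  rewrite (bchl_represents N _ _ (DKB2_factors_represented N G m S HS) k z Hz).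
  rewrite (lbchl_palindrome (dkb_word N G m S) k Hk).
  destruct k as [|[|[|[|[|k]]]]]; try lia; try reflexivity.
  - apply sval_pal1_dkb_word; auto.
  - apply sval_pal3_dkb_word; auto.
Qed.
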